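(* Let $X\in\mathbb{R}^{n\times d}$ with rows $x_1,\dots,x_n$ and let $w\in\mathbb{R}^n$ with $w_i\in\{v_1,\dots,v_t\}$ for all $i\in[n]$, where $v_1,\dots,v_t>0$. The range space induced by $\mathcal{F}_{\log}=\{\beta\mapsto w_i\cdot g(x_i\beta)\mid i\in[n]\}$ has VC dimension at most $t(d+1)$.
   Context: $g(z)=\ln(1+e^z)$. For a finite set $\mathcal{F}$ of functions $\mathbb{R}^d\to\mathbb{R}_{\ge0}$, for $\beta\in\mathbb{R}^d$ and $r\ge 0$ let $\mathrm{range}_{\mathcal{F}}(\beta,r)=\{f\in\mathcal{F}\mid f(\beta)\ge r\}$, and let $\mathrm{ranges}(\mathcal{F})=\{\mathrm{range}_{\mathcal{F}}(\beta,r)\mid\beta\in\mathbb{R}^d,r\ge 0\}$; the range space induced by $\mathcal{F}$ is $(\mathcal{F},\mathrm{ranges}(\mathcal{F}))$. Its VC dimension is the largest size of a subset $G\subseteq\mathcal{F}$ that is shattered, i.e. $|\{G\cap R\mid R\in\mathrm{ranges}(\mathcal{F})\}|=2^{|G|}$. *)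

From Stdlib Require Import Reals List.
From mathcomp Require Import all_boot.
Open Scope R_scope.

Definition g (z : R) : R := ln (1 + exp z).

Definition dotR {d : nat} (x y : 'I_d -> R) : R :=
  \big[Rplus/0]_(j < d) (x j * y j).

Definition range_of {D : Type} (F : (D -> R) -> Prop) (beta : D) (r : R)
  : (D -> R) -> Prop := fun f => F f /\ r <= f beta.

Definition shattered {D : Type} (F : (D -> R) -> Prop) (G : list (D -> R)) : Prop :=
  NoDup G /\ (forall f, In f G -> F f) /\
  forall S : (D -> R) -> Prop,
    exists (beta : D) (r : R), 0 <= r /\
      forall f, In f G -> (range_of F beta r f <-> S f).

Definition VCdim_le {D : Type} (F : (D -> R) -> Prop) (k : nat) : Prop :=
  forall G, shattered F G -> (length G <= k)%nat.

Definition F_log {n d : nat} (X : 'I_n -> 'I_d -> R) (w : 'I_n -> R)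
  : (('I_d -> R) -> R) -> Prop :=
  fun f => exists i : 'I_n, f = (fun beta => w i * g (dotR (X i) beta)).

From Stdlib Require Import Reals List Lra Classical ClassicalEpsilon.
From mathcomp Require Import all_boot all_order all_algebra.
From mathcomp Require Import Rstruct.
Import GRing.Theory Num.Theory Order.TTheory.
Open Scope R_scope.

(* Any d+2 points y_j of R^d are affinely dependent: some nonzero lam has
   sum_j lam_j = 0 and sum_j lam_j y_j = 0.  Labelling the points by the sign
   of lam_j gives a labelling that no functional beta realizes by a threshold,
   since sum_j lam_j <y_j, beta> = 0 forbids every positive point to lie
   strictly above every nonpositive one.  For functions beta |-> c h(<x, beta>)
   with c > 0 and h nondecreasing, the ranges f(beta) >= r are exactly such
   thresholds, so they shatter at most d+1 of them.  Functions of F_log with a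
   common weight are of this form, and by pigeonhole a shattered set of more
   than t(d+1) of them contains d+2 with a common weight. *)

Section AffineDependence.
Set Implicit Arguments.
Unset Strict Implicit.
Local Open Scope ring_scope.

Lemma exists_affine_dependence (F : fieldType) (d : nat) (y : 'I_d.+2 -> 'I_d -> F) :
  exists lam : 'I_d.+2 -> F, (exists j, lam j != 0) /\ \sum_j lam j = 0 /\
    forall c, \sum_j lam j * y j c = 0.
Proof.
set A : 'M[F]_(d.+2, 1 + d) := row_mx (const_mx 1) (\matrix_(j, c) y j c).
have ker_neq0 : kermx A != 0.
  rewrite -mxrank_eq0 mxrank_ker subn_eq0 -ltnNge.
  by apply: leq_ltn_trans (rank_leq_col A) _; rewrite add1n.
have [j row_neq0] : exists j, row j (kermx A) != 0.
  apply/existsP; apply: contraR ker_neq0 => /existsPn row_eq0.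
  by apply/eqP/row_matrixP => i; rewrite row0; apply/eqP; rewrite -[_ == _]negbK.
set u := row j (kermx A).
have : u *m A = 0 by rewrite /u -row_mul mulmx_ker row0.
rewrite /A mul_mx_row => /eqP; rewrite row_mx_eq0 => /andP[/eqP sum0 /eqP comb0].
exists (fun i => u ord0 i); split; [|split].
- apply/existsP; apply: contraR row_neq0 => /existsPn u0.
  by apply/eqP/rowP => i; rewrite [RHS]mxE; apply/eqP; rewrite -[_ == _]negbK.
- have := congr1 (fun M : 'M[F]_1 => M ord0 ord0) sum0; rewrite !mxE => sumE.
  by rewrite -[RHS]sumE; apply: eq_bigr => i _; rewrite [const_mx _ _ _]mxE mulr1.
- move=> c; have := congr1 (fun M : 'M[F]_(1, d) => M ord0 c) comb0.
  rewrite !mxE => combE; rewrite -[RHS]combE.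
  apply: eq_bigr => i _; congr (_ * _); by rewrite mxE.
Qed.

(* If every positive point lay strictly above every nonpositive one, then
   taking s positive with z s minimal, sum_j lam_j (z_j - z_s) would be a sum
   of nonnegative terms, one of them positive, yet equal to 0. *)
Lemma affine_dependence_not_separated (R : realDomainType) (m : nat)
    (lam z : 'I_m -> R) :
  (exists j, lam j != 0) -> \sum_j lam j = 0 -> \sum_j lam j * z j = 0 ->
  ~ (forall a b, 0 < lam a -> lam b <= 0 -> z b < z a).
Proof.
move=> [j0 lam_j0] sum0 comb0 sep.
have [b lam_b] : exists b, lam b < 0.
  apply: NNPP => nneg; move/negP: lam_j0; apply; apply/eqP.
  apply: (psumr_eq0P (P := predT)) => // i _.
  by rewrite leNgt; apply/negP => ?; apply: nneg; exists i.
have [a lam_a] : exists a, 0 < lam a.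
  apply: NNPP => npos; move/negP: lam_j0; apply; rewrite -oppr_eq0; apply/eqP.
  apply: (psumr_eq0P (P := predT) (F := fun i => - lam i)) => //.
    by move=> i _; rewrite oppr_ge0 leNgt; apply/negP => ?; apply: npos; exists i.
  by rewrite sumrN sum0 oppr0.
case: (@arg_minP _ _ _ a (fun i => 0 < lam i) z lam_a) => s lam_s z_min.
have : \sum_j lam j * (z j - z s) = 0.
  under eq_bigr => j _ do rewrite mulrBr.
  by rewrite sumrB comb0 -mulr_suml sum0 mul0r subr0.
apply/eqP; rewrite psumr_neq0 //.
- apply/hasP; exists b; first by rewrite mem_index_enum.
  by rewrite /= nmulr_rgt0 // subr_lt0; apply: sep; last exact: ltW.
- move=> i _; case: (ltgtP (lam i) 0) => [lam_i|lam_i|->]; last by rewrite mul0r.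
  + by rewrite nmulr_rge0 // subr_le0; apply/ltW/sep; last exact: ltW.
  + by apply: mulr_ge0; [exact: ltW | rewrite subr_ge0; apply: z_min].
Qed.

End AffineDependence.

Section Shattering.
Set Implicit Arguments.
Unset Strict Implicit.

Lemma exists_unseparated_labelling (d : nat) (y : 'I_d.+2 -> 'I_d -> R) :
  exists P : 'I_d.+2 -> Prop, forall beta : 'I_d -> R,
    ~ (forall a b, P a -> ~ P b -> dotR (y b) beta < dotR (y a) beta).
Proof.
have [lam [lam_neq0 [sum0 comb0]]] := exists_affine_dependence y.
exists (fun j => (0 < lam j)%R) => beta sep.
apply: (affine_dependence_not_separated (z := fun j => dotR (y j) beta)
          lam_neq0 sum0).
- under eq_bigr => j _ do rewrite /dotR mulr_sumr.
  rewrite exchange_big /= big1 // => c _.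
  transitivity ((\sum_j lam j * y j c) * beta c)%R; last by rewrite comb0 mul0r.
  by rewrite mulr_suml; apply: eq_bigr => j _; rewrite mulrA.
- move=> a b lam_a lam_b; apply/RltP/sep => //.
  by rewrite ltNge lam_b.
Qed.

Lemma shattered_incl (D : Type) (F : (D -> R) -> Prop) (G G' : list (D -> R)) :
  shattered F G -> NoDup G' -> incl G' G -> shattered F G'.
Proof.
move=> [_ [inF shat]] nodup sub; split; [done | split].
- by move=> f /sub /inF.
- move=> S; have [beta [r [r_ge0 range_S]]] := shat S.
  by exists beta, r; split=> // f /sub; apply: range_S.
Qed.

Lemma shattered_ridge_length_le (d : nat) (F : (('I_d -> R) -> R) -> Prop)
    (h : R -> R) (c : R) (xf : (('I_d -> R) -> R) -> 'I_d -> R)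
    (G : list (('I_d -> R) -> R)) :
  (forall x y, x <= y -> h x <= h y) -> 0 < c -> shattered F G ->
  (forall f, In f G -> f = (fun beta => c * h (dotR (xf f) beta))) ->
  (length G <= d.+1)%N.
Proof.
move=> h_mono c_gt0 [nodup [inF shat]] ridge.
rewrite leqNgt; apply/negP => len_G.
pose fj (j : 'I_d.+2) := List.nth j G (fun _ => 0).
have j_lt (j : 'I_d.+2) : (j < length G)%coq_nat.
  by apply/ssrnat.ltP; apply: leq_trans (ltn_ord j) len_G.
have fj_in j : In (fj j) G by apply: nth_In.
have fj_inj a b : fj a = fj b -> a = b.
  move=> e; apply: val_inj.
  exact: (proj1 (NoDup_nth G (fun _ => 0)) nodup _ _ (j_lt a) (j_lt b) e).
have fjE j beta : fj j beta = c * h (dotR (xf (fj j)) beta).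
  by rewrite {1}(ridge _ (fj_in j)).
have [P unsep] := exists_unseparated_labelling (fun j => xf (fj j)).
have [beta [r [_ range_P]]] := shat (fun f => exists j, P j /\ f = fj j).
apply: (unsep beta) => a b Pa nPb.
have r_le_a : r <= fj a beta.
  by case: (proj2 (range_P _ (fj_in a))); first by exists a.
have r_nle_b : ~ r <= fj b beta.
  move=> r_le_b.
  have [j [Pj e]] := proj1 (range_P _ (fj_in b)) (conj (inF _ (fj_in b)) r_le_b).
  by apply: nPb; rewrite (fj_inj _ _ e).
apply: Rnot_le_lt => le_ba; apply: r_nle_b; apply: Rle_trans r_le_a _.
by rewrite !fjE; apply: Rmult_le_compat_l; [lra | apply: h_mono].
Qed.

Lemma pigeonhole_filter (A : Type) (t m : nat) (kf : A -> 'I_t) (G : list A) :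
  (t * m < length G)%N -> exists k, (m < length (List.filter (fun f => kf f == k) G))%N.
Proof.
have len_filter k : length (List.filter (fun f => kf f == k) G) = count_mem k (map kf G).
  by elim: G => //= a G IH; case: (kf a == k); rewrite /= IH.
move=> len_G; apply/existsP; apply: contraLR len_G => /existsPn few.
have -> : length G = size (map kf G) by rewrite size_map.
rewrite -leqNgt -sum1_size (partition_big id predT) //=.
rewrite -[t in (_ <= t * _)%N]card_ord -sum_nat_const; apply: leq_sum => k _.
by rewrite sum1_count leqNgt -len_filter; apply: few.
Qed.

Lemma list_choice (A B : Type) (P : A -> B -> Prop) (G : list A) :
  inhabited B -> (forall f, In f G -> exists y, P f y) ->
  exists sel : A -> B, forall f, In f G -> P f (sel f).
Proof.
move=> [y0] ex_y.
have ex_sel f : exists y, In f G -> P f y.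
  by case: (classic (In f G)) => [/ex_y [y Py] | not_in]; [exists y | exists y0].
exists (fun f => proj1_sig (constructive_indefinite_description _ (ex_sel f))) => f.
exact: proj2_sig (constructive_indefinite_description _ (ex_sel f)).
Qed.

Lemma g_le x y : x <= y -> g x <= g y.
Proof.
move=> le_xy; case: (Rle_lt_or_eq_dec _ _ le_xy) => [lt_xy|->]; last exact: Rle_refl.
apply/Rlt_le/ln_increasing; first by have := exp_pos x; lra.
by have := exp_increasing _ _ lt_xy; lra.
Qed.

End Shattering.

Theorem lemma6 (n d t : nat) (X : 'I_n -> 'I_d -> R) (w : 'I_n -> R)
  (v : 'I_t -> R) (hv : forall k, 0 < v k)
  (hw : forall i, exists k, w i = v k) :
  VCdim_le (F_log X w) (t * (d + 1))%nat.
Proof.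
move=> G shat; have [nodup [inF _]] := shat.
have index_ex f : In f G -> exists p : 'I_n * 'I_t,
    f = (fun beta => w p.1 * g (dotR (X p.1) beta)) /\ w p.1 = v p.2.
  by move=> /inF [i ->]; have [k wk] := hw i; exists (i, k).
case: G => [//|f0 G0] in shat nodup inF index_ex *.
have [p0 _] := index_ex f0 (in_eq _ _).
set G := f0 :: G0 in shat nodup index_ex *.
have [sel selP] := list_choice (inhabits p0) index_ex.
rewrite leqNgt addn1; apply/negP => /(pigeonhole_filter (fun f => (sel f).2)) [k].
set Gk := List.filter _ G; apply/negP; rewrite -leqNgt.
have sub : incl Gk G by move=> f /filter_In [].
apply: (shattered_ridge_length_le (xf := fun f => X (sel f).1) g_le (hv k)).
- exact: shattered_incl shat (NoDup_filter _ nodup) sub.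
- move=> f /filter_In [f_in /eqP <-]; have [f_eq w_sel] := selP f f_in.
  by rewrite {1}f_eq w_sel.
Qed.
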